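(* There exist constants $\varepsilon>0$ and $C>0$ such that $\tilde g(n)\le C(2-\varepsilon)^n$ for all positive integers $n$.
   Context: $[n]_0=\{0,1,\dots,n\}$, $S_1+S_2=\{u+v:u\in S_1,v\in S_2\}$. $\tilde g(n)$ is the sum of $2^{-|(S_1+S_2)\cap[n]_0|}$ over all pairs $S_1,S_2\subseteq[n]_0$ such that $0\in S_1\cap S_2$, $n+1\notin S_1+S_2$, and $k\in S_1+S_2$ for every integer $k$ with $\frac{3n}{4}+1\le k\le\frac{15n}{16}$. *)

From mathcomp Require Import all_boot all_order all_algebra.
Set Implicit Arguments. Unset Strict Implicit. Unset Printing Implicit Defensive.
Import Order.TTheory GRing.Theory Num.Theory.

(* Subsets of [n]_0 = {0,...,n} are represented as {set 'I_n.+1}. *)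

Definition in_sumset (n : nat) (S1 S2 : {set 'I_n.+1}) (k : nat) : bool :=
  [exists u : 'I_n.+1, [exists v : 'I_n.+1,
     [&& u \in S1, v \in S2 & (u + v == k)%N]]].

Definition sumset_card_le_n (n : nat) (S1 S2 : {set 'I_n.+1}) : nat :=
  #|[set k : 'I_n.+1 | in_sumset S1 S2 k]|.

Definition gt_admissible (n : nat) (S1 S2 : {set 'I_n.+1}) : bool :=
  [&& (ord0 \in S1), (ord0 \in S2), ~~ in_sumset S1 S2 n.+1 &
      [forall k : 'I_(2 * n).+1,
        ((3 * n <= 4 * (k - 1)) && (16 * k <= 15 * n) && (1 <= k))%N
          ==> in_sumset S1 S2 k]].

Definition gtilde (n : nat) : rat :=
  (\sum_(S1 : {set 'I_n.+1}) \sum_(S2 : {set 'I_n.+1} | gt_admissible S1 S2)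
     (2%:R ^- sumset_card_le_n S1 S2))%R.

From mathcomp Require Import all_boot all_order all_algebra.
From mathcomp Require Import reals.
From mathcomp Require Import zify ring lra.
Set Implicit Arguments. Unset Strict Implicit. Unset Printing Implicit Defensive.
Import Order.TTheory GRing.Theory Num.Theory.

(* Each summand [2^-|A|], with [A = (S1 + S2) \cap [n]_0], is the proportion of
   subsets [T] of [[n]_0] avoiding [A]; forgetting the window condition,
   [g(n) <= N / 2^(n+1)] where [N] counts triples [(S1, S2, T)] with
   [0 \in S1 \cap S2], [n + 1 \notin S1 + S2] and [T] disjoint from [S1 + S2].
   Apart from [S1 = S2 = {0}], let [s] be the least positive element of
   [S1 \cup S2], say [s \in S1]. Reading the mirrored positions [q + 1] and
   [n - q] together turns the triple into a word of length [n/2] over 64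
   letters in which every letter is constrained only by the letter [s] places
   earlier: [0 + S1], [0 + S2] and [s + S2] avoid [T], and no [i \in S1] has
   [n + 1 - i \in S2]. A transfer-matrix bound with weights [1] and [7/5]
   gives at most [(63/4)^(n/2)] such words; since [63/4 < 16], this yields
   [N <= 2^(n+1) + 16 (n+1) 3.97^n] and [g(n) = O(1.99^n)]. *)

Section FfunSequences.
Variables (T : finType) (x0 : T).

Definition fnth m (f : {ffun 'I_m -> T}) (k : nat) : T :=
  if insub k is Some i then f i else x0.

Definition frcons m (f : {ffun 'I_m -> T}) (z : T) : {ffun 'I_m.+1 -> T} :=
  [ffun i : 'I_m.+1 => if (i < m)%N then fnth f i else z].

Lemma fnthE m (f : {ffun 'I_m -> T}) k (ltkm : (k < m)%N) : fnth f k = f (Ordinal ltkm).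
Proof. by rewrite /fnth insubT. Qed.

Lemma fnth_default m (f : {ffun 'I_m -> T}) k : (m <= k)%N -> fnth f k = x0.
Proof. by move=> lemk; rewrite /fnth insubF // ltnNge lemk. Qed.

Lemma fnth_rcons m (f : {ffun 'I_m -> T}) z k :
  fnth (frcons f z) k = if (k < m)%N then fnth f k else if k == m then z else x0.
Proof.
have [ltkm1|lem1k] := ltnP k m.+1.
  by rewrite (fnthE _ ltkm1) ffunE /=; case: (ltngtP k m) ltkm1 => // *; exfalso; lia.
by rewrite fnth_default //; case: (ltngtP k m) lem1k => // *; exfalso; lia.
Qed.

Lemma big_ffunS (R : Type) (idx : R) (op : Monoid.com_law idx) m
    (F : {ffun 'I_m.+1 -> T} -> R) :
  \big[op/idx]_f F f = \big[op/idx]_(f : {ffun 'I_m -> T}) \big[op/idx]_(z : T) F (frcons f z).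
Proof.
rewrite pair_big (reindex (fun p => frcons p.1 p.2)) //=.
exists (fun f => ([ffun i : 'I_m => f (widen_ord (leqnSn m) i)], f ord_max)).
  move=> [f z] _ /=; congr (_, _); last by rewrite ffunE ltnn.
  apply/ffunP => i; rewrite !ffunE /= ltn_ord (fnthE _ (ltn_ord i)).
  by congr (f _); apply: val_inj.
move=> f _; apply/ffunP => i; rewrite ffunE; case: ifP => ltim.
  by rewrite (fnthE _ ltim) ffunE; congr (f _); apply: val_inj.
by congr (f _); apply: val_inj => /=; have := ltn_ord i; lia.
Qed.

End FfunSequences.

Section LaggedTransfer.
Local Open Scope ring_scope.
Variables (R : numDomainType) (T : finType) (x0 : T) (s : nat).
Variables (head : nat -> pred T) (step : T -> T -> bool) (w : T -> R) (lam : R).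
Hypothesis s_gt0 : (0 < s)%N.
Hypothesis w_ge1 : forall z, 1 <= w z.
Hypothesis sum_head_le : forall q, (q < s)%N -> \sum_(z | head q z) w z <= lam.
Hypothesis sum_step_le : forall y, \sum_(z | step y z) w z <= lam * w y.

Local Notation fnth := (fnth x0).
Local Notation frcons := (frcons x0).

Definition lag_ok m (f : {ffun 'I_m -> T}) (q : nat) : bool :=
  if (q < s)%N then head q (fnth f q) else step (fnth f (q - s)) (fnth f q).

Definition lag_valid m (f : {ffun 'I_m -> T}) : bool := all (lag_ok f) (iota 0 m).

(* The product of the weights of the last [s] entries: the potential whose
   total over valid sequences grows by at most a factor [lam] per entry. *)
Definition window m (f : {ffun 'I_m -> T}) : R := \prod_(m - s <= k < m) w (fnth f k).

Lemma lam_ge0 : 0 <= lam.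
Proof.
apply: le_trans (sum_head_le s_gt0); apply: sumr_ge0 => z _.
exact: le_trans (w_ge1 z).
Qed.

Lemma window_ge1 m (f : {ffun 'I_m -> T}) : 1 <= window f.
Proof.
by apply: (big_ind (fun x : R => 1 <= x)) => //; exact: mulr_ege1.
Qed.

Lemma lag_valid_rcons m (g : {ffun 'I_m -> T}) z :
  lag_valid (frcons g z) = lag_valid g && lag_ok (frcons g z) m.
Proof.
rewrite /lag_valid -[in iota 0 m.+1]addn1 iotaD all_cat /= andbT; congr andb.
apply: eq_in_all => q; rewrite mem_iota => /andP [_ ltqm].
by rewrite /lag_ok !fnth_rcons ltqm; case: ltnP => // _; rewrite ifT //; lia.
Qed.

Lemma lag_ok_rcons m (g : {ffun 'I_m -> T}) z :
  lag_ok (frcons g z) m = if (m < s)%N then head m z else step (fnth g (m - s)) z.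
Proof.
by rewrite /lag_ok !fnth_rcons ltnn eqxx; case: ltnP => // lesm; rewrite ifT //; lia.
Qed.

Lemma window_rcons m (g : {ffun 'I_m -> T}) z :
  window (frcons g z) = (\prod_(m.+1 - s <= k < m) w (fnth g k)) * w z.
Proof.
rewrite /window big_nat_recr /=; last by lia.
rewrite fnth_rcons ltnn eqxx; congr (_ * _).
by apply: eq_big_nat => k /andP [_ ltkm]; rewrite fnth_rcons ltkm.
Qed.

Lemma sum_window_rcons_le m (g : {ffun 'I_m -> T}) :
  \sum_(z | lag_ok (frcons g z) m) window (frcons g z) <= lam * window g.
Proof.
under eq_bigl => z do rewrite lag_ok_rcons.
under eq_bigr => z _ do rewrite window_rcons.
rewrite -mulr_sumr; set P := \prod_(_ <= k < _) _.
have P_ge0 : 0 <= P by apply: prodr_ge0 => k _; exact: le_trans (w_ge1 _).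
have [ltms|lesm] := ltnP m s.
  have -> : window g = P by rewrite /window; congr (\prod_(_ <= _ < _) _); lia.
  by rewrite mulrC ler_wpM2r // sum_head_le.
have -> : window g = w (fnth g (m - s)) * P.
  by rewrite /window big_ltn; [congr (_ * \prod_(_ <= _ < _) _) | ]; lia.
by rewrite mulrC mulrA ler_wpM2r // mulrC sum_step_le.
Qed.

Lemma sum_window_le m : \sum_(f : {ffun 'I_m -> T} | lag_valid f) window f <= lam ^+ m.
Proof.
elim: m => [|m IHm].
  rewrite (big_pred1 [ffun=> x0]) => [|f]; first by rewrite /window big_geq.
  by rewrite /lag_valid /=; apply/esym/eqP/ffunP => -[].
rewrite big_mkcond (big_ffunS x0) exprS.
apply: le_trans (ler_wpM2l lam_ge0 IHm); rewrite mulr_sumr [X in _ <= X]big_mkcond; apply: ler_sum => g _.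
under eq_bigr => z _ do rewrite lag_valid_rcons.
case: (lag_valid g) => /=; last by rewrite big1 ?mulr0.
by rewrite -big_mkcond sum_window_rcons_le.
Qed.

Lemma card_lag_valid m : #|[set f : {ffun 'I_m -> T} | lag_valid f]|%:R <= lam ^+ m.
Proof.
rewrite -sum1dep_card natr_sum; apply: le_trans (sum_window_le m).
by apply: ler_sum => f _; exact: window_ge1.
Qed.

End LaggedTransfer.

Lemma leq_card_bigcup (I T : finType) (P : pred I) (B : I -> {set T}) :
  #|\bigcup_(i | P i) B i| <= \sum_(i | P i) #|B i|.
Proof.
apply: (big_ind2 (fun (U : {set T}) k => #|U| <= k)) => [|U1 k1 U2 k2 le1 le2|//].
  by rewrite cards0.
exact: leq_trans (leq_card_setU U1 U2) (leq_add le1 le2).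
Qed.

Local Open Scope ring_scope.

Lemma exp2N_card_compl (R : numFieldType) (T : finType) (A : {set T}) :
  (2%:R : R) ^- #|A| = #|powerset (~: A)|%:R / 2%:R ^+ #|T|.
Proof.
rewrite card_powerset natrX -(cardsC A) exprD invfM mulrCA mulfV ?mulr1 //.
by rewrite expf_neq0 // pnatr_eq0.
Qed.

Lemma bernoulli_ineq (R : realDomainType) (x : R) n : 0 <= x -> 1 + n%:R * x <= (1 + x) ^+ n.
Proof.
move=> x_ge0; elim: n => [|n IHn]; first by rewrite mul0r addr0.
rewrite exprS -natr1; have := ler0n R n; have := exprn_ge0 n (addr_ge0 ler01 x_ge0).
by move: IHn; set N := n%:R; set P := (1 + x) ^+ n => *; nra.
Qed.

Lemma linear_le_geometric (R : realFieldType) (a x : R) n : 0 <= a -> 0 < x ->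
  n.+1%:R * a ^+ n <= (1 + x^-1) * (a * (1 + x)) ^+ n.
Proof.
move=> a_ge0 x_gt0; rewrite exprMn mulrCA [leLHS]mulrC ler_wpM2l ?exprn_ge0 //.
have le_P := bernoulli_ineq n (ltW x_gt0); have y_ge0 : 0 <= 1 + x^-1 by rewrite addr_ge0 ?invr_ge0 ?ltW.
apply: le_trans (ler_wpM2l y_ge0 le_P); rewrite -natr1.
have -> : (1 + x^-1) * (1 + n%:R * x) = n%:R + 1 + (n%:R * x + x^-1).
  by field; rewrite gt_eqF.
by rewrite lerDl addr_ge0 ?mulr_ge0 ?invr_ge0 ?ler0n ?ltW.
Qed.

Lemma expr_half_le (R : realDomainType) (l r : R) n : 0 <= l -> l <= r ^+ 2 -> 1 <= r ->
  l ^+ (n %/ 2) <= r ^+ n.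
Proof.
move=> l_ge0 le_lr r_ge1; apply: le_trans (_ : r ^+ (2 * (n %/ 2)) <= _).
  by rewrite exprM lerXn2r ?nnegrE ?exprn_ge0 // (le_trans ler01).
by apply: ler_weXn2l => //; have := leq_divM n 2; lia.
Qed.

Local Close Scope ring_scope.

(* Membership of one position in [(S1, S2, T)]. *)
Definition cell : finType := (bool * bool * bool)%type.
(* The cells of the two mirrored positions [q + 1] and [n - q]. *)
Definition pstate : finType := (cell * cell)%type.
Definition pstate0 : pstate := ((false, false, false), (false, false, false)).

Definition in_S1 (c : cell) : bool := c.1.1.
Definition in_S2 (c : cell) : bool := c.1.2.
Definition in_T (c : cell) : bool := c.2.

Definition cell_ok (c : cell) : bool := ~~ (in_T c && (in_S1 c || in_S2 c)).

Definition pair_ok (z : pstate) : bool :=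
  [&& cell_ok z.1, cell_ok z.2, ~~ (in_S1 z.1 && in_S2 z.2) & ~~ (in_S1 z.2 && in_S2 z.1)].

Definition prefix_ok (z : pstate) : bool := [&& pair_ok z, ~~ in_S1 z.1 & ~~ in_S2 z.1].

Definition start_ok (z : pstate) : bool := pair_ok z && in_S1 z.1.

(* Entry [q] holds position [q + 1]: positions below [s] avoid [S1 \cup S2], and [s \in S1]. *)
Definition head_ok (s q : nat) : pred pstate := if q.+1 < s then prefix_ok else start_ok.

(* [y] is the entry [s] places before [z]; [T] must avoid [s + S2]. *)
Definition tail_ok (y z : pstate) : bool :=
  [&& pair_ok z, ~~ (in_S2 y.1 && in_T z.1) & ~~ (in_S2 z.2 && in_T y.2)].

Definition pair_words (s m : nat) : {set {ffun 'I_m -> pstate}} :=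
  [set f | lag_valid pstate0 s (head_ok s) tail_ok f].

(* Five times the weight, in [nat] so that the finite checks below evaluate. *)
Definition weight5 (z : pstate) : nat := if ~~ in_S2 z.1 && ~~ in_T z.2 then 7 else 5.

(* [index_enum pstate] does not reduce under [vm_compute]; this list does. *)
Definition cells : seq cell :=
  [seq (ab, c) | ab <- [seq (a, b) | a <- [:: true; false], b <- [:: true; false]],
                 c <- [:: true; false]].
Definition pstates : seq pstate := [seq (y, z) | y <- cells, z <- cells].

Lemma perm_pstates : perm_eq (index_enum pstate) pstates.
Proof.
apply: uniq_perm; [exact: index_enum_uniq | by vm_compute |].
by move=> z; rewrite mem_index_enum; case: z => [[[[] []] []] [[[] []] []]]; vm_compute.
Qed.

Lemma sum_tail_weight5 y : 4 * \sum_(z | tail_ok y z) weight5 z <= 63 * weight5 y.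
Proof.
rewrite (perm_big _ perm_pstates) unlock.
by case: y => [[[[] []] []] [[[] []] []]]; vm_compute.
Qed.

Lemma sum_prefix_weight5 : 4 * \sum_(z | prefix_ok z) weight5 z <= 63 * 5.
Proof. by rewrite (perm_big _ perm_pstates) unlock; vm_compute. Qed.

Lemma sum_start_weight5 : 4 * \sum_(z | start_ok z) weight5 z <= 63 * 5.
Proof. by rewrite (perm_big _ perm_pstates) unlock; vm_compute. Qed.

Local Open Scope ring_scope.

Definition rate : rat := 63%:R / 4%:R.
Lemma rate_ge0 : 0 <= rate.
Proof. by rewrite divr_ge0 ?ler0n. Qed.

Definition weight (z : pstate) : rat := (weight5 z)%:R / 5%:R.

Lemma weight_ge1 z : 1 <= weight z.
Proof.
by rewrite ler_pdivlMr ?ltr0n // mul1r ler_nat /weight5; case: ifP.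
Qed.

Lemma sum_weight_le (P : pred pstate) (c : nat) :
  (4 * \sum_(z | P z) weight5 z <= 63 * c)%N -> \sum_(z | P z) weight z <= rate * (c%:R / 5%:R).
Proof.
rewrite -(ler_nat rat) natrM natr_sum => le_sum.
rewrite -mulr_suml /rate; move: le_sum; rewrite natrM.
set S := \sum_(_ | _) _; set C := c%:R => le_sum; lra.
Qed.

Lemma card_pair_words s m : (0 < s)%N -> #|pair_words s m|%:R <= rate ^+ m.
Proof.
rewrite /pair_words => s_gt0; apply: (card_lag_valid pstate0 s_gt0 weight_ge1) => [q _|y].
  rewrite /head_ok; case: ifP => _;
    [have := sum_weight_le sum_prefix_weight5 | have := sum_weight_le sum_start_weight5];
    by rewrite divff ?mulr1 ?pnatr_eq0.
exact: sum_weight_le (sum_tail_weight5 y).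
Qed.

Local Close Scope ring_scope.

Lemma in_sumsetC n (S1 S2 : {set 'I_n.+1}) k : in_sumset S2 S1 k = in_sumset S1 S2 k.
Proof.
by apply/existsP/existsP => -[u /existsP [v /and3P [Su Sv uv]]]; exists v;
  apply/existsP; exists u; rewrite Su Sv addnC.
Qed.

Section Encoding.
Variable n : nat.
Local Notation I := 'I_n.+1.

Definition triple : finType := ({set I} * {set I} * {set I})%type.

Definition sumset (S1 S2 : {set I}) : {set I} := [set k : I | in_sumset S1 S2 k].

(* [gt_admissible] without its window condition, extended by a set [T]
   avoiding [S1 + S2]. *)
Definition admissible (x : triple) : bool :=
  let: (S1, S2, T) := x in
  [&& ord0 \in S1, ord0 \in S2, ~~ in_sumset S1 S2 n.+1 & T \subset ~: sumset S1 S2].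

Definition nmem (S : {set I}) (k : nat) : bool := (k < n.+1)%N && (inord k \in S).

Definition gap_below (x : triple) (s : nat) : bool :=
  [forall j : I, (0 < j < s)%N ==> (j \notin x.1.1) && (j \notin x.1.2)].

Definition lead1 (s : nat) : {set triple} :=
  [set x | [&& admissible x, nmem x.1.1 s & gap_below x s]].
Definition lead2 (s : nat) : {set triple} :=
  [set x | [&& admissible x, nmem x.1.2 s & gap_below x s]].
Definition lead0 : {set triple} :=
  [set x | [&& admissible x, x.1.1 == [set ord0] & x.1.2 == [set ord0]]].

Definition cell_at (x : triple) (i : nat) : cell := (nmem x.1.1 i, nmem x.1.2 i, nmem x.2 i).

Definition encode_pairs (x : triple) : {ffun 'I_(n %/ 2) -> pstate} :=
  [ffun q : 'I_(n %/ 2) => (cell_at x q.+1, cell_at x (n - q))].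

(* For odd [n] the middle position [n %/ 2 + 1] is not in any mirrored pair. *)
Definition encode (x : triple) := (encode_pairs x, cell_at x (n %/ 2).+1).

Lemma nmem_ord S (j : I) : nmem S j = (j \in S).
Proof. by rewrite /nmem ltn_ord inord_val. Qed.

Lemma nmem0 S : nmem S 0 = (ord0 \in S).
Proof. by rewrite -[0%N]/(nat_of_ord (@ord0 n)) nmem_ord. Qed.

Lemma in_sumset_nmem S1 S2 u v : nmem S1 u -> nmem S2 v -> in_sumset S1 S2 (u + v).
Proof.
move=> /andP [ltu Su] /andP [ltv Sv]; apply/existsP; exists (inord u); apply/existsP.
by exists (inord v); rewrite Su Sv /= !inordK.
Qed.

Lemma admissible_ord0 x : admissible x -> (ord0 \in x.1.1) && (ord0 \in x.1.2).
Proof. by case: x => [[? ?] ?] /and4P [-> ->]. Qed.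

Lemma notin_sumset x k : admissible x -> nmem x.2 k -> ~~ in_sumset x.1.1 x.1.2 k.
Proof.
case: x => [[S1 S2] T] /and4P [_ _ _ /subsetP subT] /andP [ltk Tk].
by have := subT _ Tk; rewrite !inE inordK.
Qed.

Lemma not_nmem_mirror x u v :
  admissible x -> u + v = n.+1 -> nmem x.1.1 u -> nmem x.1.2 v -> False.
Proof.
case: x => [[S1 S2] T] /and4P [_ _ /negP out _] uv S1u S2v.
by apply: out; rewrite -uv in_sumset_nmem.
Qed.

Lemma cell_ok_at x i : admissible x -> cell_ok (cell_at x i).
Proof.
move=> adm; apply/negP => /andP [Ti S12i]; have := notin_sumset adm Ti.
case/andP: (admissible_ord0 adm) => S10 S20; move: S12i => /=.
by case/orP => Si; [rewrite -[i]addn0 | rewrite -[i]add0n]; rewrite in_sumset_nmem ?nmem0.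
Qed.

Lemma pair_ok_at x q : admissible x -> (q < n %/ 2)%N ->
  pair_ok (cell_at x q.+1, cell_at x (n - q)).
Proof.
move=> adm ltq; have := leq_div n 2 => len.
rewrite /pair_ok /= !cell_ok_at //=; apply/andP; split; apply/negP => /andP [S1 S2].
  by apply: (not_nmem_mirror adm _ S1 S2); lia.
by apply: (not_nmem_mirror adm _ S1 S2); lia.
Qed.

Lemma encode_pairs_valid s x : (0 < s)%N -> x \in lead1 s ->
  encode_pairs x \in pair_words s (n %/ 2).
Proof.
move=> s_gt0; rewrite !inE => /and3P [adm S1s gap]; have := leq_div n 2 => len.
apply/allP => q; rewrite mem_iota add0n => /andP [_ ltq].
rewrite /lag_ok (fnthE _ _ ltq) ffunE /=; case: ltnP => [ltqs|lesq].
  rewrite /head_ok; case: ltnP => [lt1s|le_sq1].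
    have := forallP gap (inord q.+1); rewrite inordK; last by lia.
    rewrite lt1s /= /prefix_ok pair_ok_at //= -!nmem_ord !inordK; last by lia.
    exact: id.
  by rewrite /start_ok pair_ok_at //= /in_S1 /=; have -> : (q.+1 = s :> nat) by lia.
have ltqs : (q - s < n %/ 2)%N by lia.
rewrite (fnthE _ _ ltqs) ffunE.
rewrite /tail_ok pair_ok_at //=; apply/andP; split; apply/negP => /andP [S2 Tz].
  have := notin_sumset adm Tz; have -> : q.+1 = (s + (q - s).+1)%N by lia.
  by rewrite in_sumset_nmem.
have := notin_sumset adm Tz; have -> : (n - (q - s) = s + (n - q))%N by lia.
by rewrite in_sumset_nmem.
Qed.

Lemma nmem_T0 x : admissible x -> nmem x.2 0 = false.
Proof.
move=> adm; apply/negP => T0; have := notin_sumset adm T0.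
by case/andP: (admissible_ord0 adm) => S10 S20; rewrite -[0%N]addn0 in_sumset_nmem ?nmem0.
Qed.

Lemma cell_at0 x : admissible x -> cell_at x 0 = (true, true, false).
Proof.
by move=> adm; case/andP: (admissible_ord0 adm); rewrite /cell_at (nmem_T0 adm) !nmem0 => -> ->.
Qed.

Lemma cell_at_encode x x' i : admissible x -> admissible x' -> encode x = encode x' ->
  (i < n.+1)%N -> cell_at x i = cell_at x' i.
Proof.
move=> adm adm' enc_eq lti; have := leq_divM n 2 => len.
have [enc_pairs enc_mid] := (congr1 fst enc_eq, congr1 snd enc_eq).
have [->|i_gt0] := posnP i; first by rewrite !cell_at0.
have [le_i_half|lt_half_i] := leqP i (n %/ 2).
  have ltq : (i.-1 < n %/ 2)%N by lia.
  have := congr1 (fun f : {ffun _ -> _} => f (Ordinal ltq)) enc_pairs; rewrite !ffunE /= prednK //.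
  by move/(congr1 fst).
have [lt_mirror|ge_mirror] := ltnP (n - i) (n %/ 2).
  have := congr1 (fun f : {ffun _ -> _} => f (Ordinal lt_mirror)) enc_pairs; rewrite !ffunE /=.
  by rewrite (_ : n - (n - i) = i)%N; [move/(congr1 snd) | lia].
by rewrite (_ : i = (n %/ 2).+1); [ | lia].
Qed.

Lemma encode_inj : {in admissible &, injective encode}.
Proof.
move=> x x' adm adm' enc_eq; have cells_eq (j : I) := cell_at_encode adm adm' enc_eq (ltn_ord j).
case: x x' cells_eq {adm adm' enc_eq} => [[S1 S2] T] [[S1' S2'] T'] cells_eq.
by congr (_, _, _); apply/setP => j; have [] := cells_eq j; rewrite /= !nmem_ord.
Qed.

Lemma card_lead1 s : (0 < s)%N ->
  #|lead1 s| <= 8 * #|pair_words s (n %/ 2)|.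
Proof.
move=> s_gt0; rewrite -(card_in_imset (f := encode)); last first.
  by move=> x x'; rewrite !inE => /andP [adm _] /andP [adm' _]; exact: encode_inj.
have card_cells : #|[set: cell]| = 8 by rewrite cardsT !card_prod card_bool.
rewrite mulnC -card_cells -cardsX; apply: subset_leq_card.
by apply/subsetP => _ /imsetP [x lead_x ->]; rewrite in_setX in_setT andbT encode_pairs_valid.
Qed.

Definition swap (x : triple) : triple := (x.1.2, x.1.1, x.2).

Lemma admissible_swap x : admissible (swap x) = admissible x.
Proof.
case: x => [[S1 S2] T]; rewrite /admissible /= in_sumsetC.
have -> : sumset S2 S1 = sumset S1 S2 by apply/setP => k; rewrite !inE in_sumsetC.
by case: (ord0 \in S1); case: (ord0 \in S2).
Qed.

Lemma card_lead2 s : #|lead2 s| <= #|lead1 s|.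
Proof.
have swap_inj : injective swap by move=> [[? ?] ?] [[? ?] ?] [-> -> ->].
rewrite -(card_imset _ swap_inj); apply/subset_leq_card/subsetP => _ /imsetP [x lead_x ->].
move: lead_x; rewrite !inE -admissible_swap => /and3P [adm S2s gap]; rewrite adm S2s /=.
by apply/forallP => j; apply/implyP => /(implyP (forallP gap j)); rewrite andbC.
Qed.

Lemma card_lead0 : #|lead0| <= 2 ^ n.+1.
Proof.
have inj : {in lead0 &, injective (fun x : triple => x.2)}.
  move=> [[? ?] ?] [[? ?] ?]; rewrite !inE /=.
  by move=> /and3P [_ /eqP-> /eqP->] /and3P [_ /eqP-> /eqP->] ->.
have card_subsets : #|powerset [set: I]| = 2 ^ n.+1 by rewrite card_powerset cardsT card_ord.
rewrite -(card_in_imset inj) -card_subsets.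
by apply/subset_leq_card/subsetP => T _; rewrite powersetE subsetT.
Qed.

Lemma admissible_cover x :
  admissible x -> x \in lead0 :|: \bigcup_(s : I | (0 < s)%N) (lead1 s :|: lead2 s).
Proof.
move=> adm; pose P (j : I) := (0 < j)%N && ((j \in x.1.1) || (j \in x.1.2)).
case: (pickP P) => [j0 Pj0|noP].
  case: (arg_minnP val Pj0) => s /andP [s_gt0 S12s] s_min.
  have gap : gap_below x s.
    apply/forallP => j; apply/implyP => /andP [j_gt0 ltjs]; rewrite -negb_or.
    by apply: contraTN ltjs => S12j; rewrite -leqNgt s_min // /P j_gt0.
  apply/setUP; right; apply/bigcupP; exists s => //.
  by rewrite !inE adm gap !nmem_ord !andbT.
have eq_set_ord0 (S : {set I}) : ord0 \in S -> (forall j : I, (0 < j)%N -> j \notin S) ->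
    S == [set ord0].
  move=> S0 S_pos; apply/eqP/setP => j; rewrite inE; have [j0|j_gt0] := posnP j.
    by rewrite (_ : j = ord0) ?S0 ?eqxx //; apply: val_inj.
  by rewrite (negbTE (S_pos j j_gt0)); apply/esym/eqP => /(congr1 val) /=; lia.
case/andP: (admissible_ord0 adm) => S10 S20; apply/setUP; left; rewrite inE adm !eq_set_ord0 //.
  by move=> j j_gt0; have := noP j; rewrite /P j_gt0 => /norP [].
by move=> j j_gt0; have := noP j; rewrite /P j_gt0 => /norP [].
Qed.

Lemma card_admissible : #|[set x | admissible x]| <=
  2 ^ n.+1 + \sum_(s : I | (0 < s)%N)
    16 * #|pair_words s (n %/ 2)|.
Proof.
have cover : [set x | admissible x] \subset lead0 :|: \bigcup_(s : I | (0 < s)%N) (lead1 s :|: lead2 s).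
  by apply/subsetP => x; rewrite inE; exact: admissible_cover.
apply: leq_trans (subset_leq_card cover) _; apply: leq_trans (leq_card_setU _ _) _.
apply: leq_add card_lead0 _; apply: leq_trans (leq_card_bigcup _ _) _.
apply: leq_sum => s s_gt0; apply: leq_trans (leq_card_setU _ _) _.
by have := card_lead1 s_gt0; have := card_lead2 s; lia.
Qed.

Definition base_ok (S1 S2 : {set I}) : bool :=
  [&& ord0 \in S1, ord0 \in S2 & ~~ in_sumset S1 S2 n.+1].

Lemma card_admissible_fibres : #|[set x : triple | admissible x]| =
  \sum_(S1 : {set I}) \sum_(S2 | base_ok S1 S2) #|powerset (~: sumset S1 S2)|.
Proof.
rewrite -sum1dep_card big_mkcond.
transitivity (\sum_(S1 : {set I}) \sum_(S2 : {set I}) \sum_(T : {set I})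
                (if admissible (S1, S2, T) then 1 else 0))%N.
  by rewrite !pair_bigA; apply: eq_bigr => -[[S1 S2] T].
apply: eq_bigr => S1 _; rewrite [RHS]big_mkcond; apply: eq_bigr => S2 _.
have adm_split T : admissible (S1, S2, T) = base_ok S1 S2 && (T \subset ~: sumset S1 S2).
  by rewrite /base_ok /= !andbA.
under eq_bigr => T _ do rewrite adm_split.
case: (base_ok S1 S2); last by rewrite big1.
by rewrite -big_mkcond sum1dep_card; congr #|pred_of_set _|; apply/setP => T; rewrite !inE powersetE.
Qed.

End Encoding.

Local Open Scope ring_scope.

Lemma gtilde_le_card n : gtilde n <= #|[set x : triple n | admissible x]|%:R / 2%:R ^+ n.+1.
Proof.
rewrite card_admissible_fibres natr_sum mulr_suml; apply: ler_sum => S1 _.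
rewrite natr_sum mulr_suml big_mkcond [X in _ <= X]big_mkcond; apply: ler_sum => S2 _.
rewrite -[in 2%:R ^+ n.+1](card_ord n.+1) -exp2N_card_compl /base_ok.
case/boolP: (gt_admissible S1 S2) => [/and4P [-> -> -> _] //|_].
by case: ifP => // _; rewrite invr_ge0 exprn_ge0 ?ler0n.
Qed.

Lemma card_admissible_le n : #|[set x : triple n | admissible x]|%:R <=
  2%:R ^+ n.+1 + n.+1%:R * (16%:R * rate ^+ (n %/ 2)) :> rat.
Proof.
apply: le_trans (_ : (2 ^ n.+1 + \sum_(s : 'I_n.+1 | (0 < s)%N)
  16 * #|pair_words s (n %/ 2)|)%:R <= _).
  by rewrite ler_nat card_admissible.
rewrite natrD natrX lerD2l natr_sum.
apply: le_trans (_ : _ <= \sum_(s : 'I_n.+1) 16%:R * rate ^+ (n %/ 2)) _; last first.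
  rewrite sumr_const card_ord [leRHS]mulr_natl. exact: lexx.
rewrite [leLHS]big_mkcond; apply: ler_sum => s _; case: ifP => [s_gt0|_].
  rewrite natrM ler_wpM2l ?ler0n //. exact: card_pair_words.
apply: mulr_ge0; [exact: ler0n | exact: exprn_ge0 rate_ge0].
Qed.

Lemma gtilde_le_geometric n : gtilde n <= 3185%:R * (199%:R / 100%:R) ^+ n.
Proof.
(* [rate <= (2 a)^2], and [(n + 1) a^n <= 398 b^n] by Bernoulli since [b = a (1 + 1/397)]. *)
pose b : rat := 199%:R / 100%:R; pose a : rat := 397%:R / 200%:R.
have le_rate : rate ^+ (n %/ 2) <= a ^+ n * 2%:R ^+ n.
  by rewrite -exprMn; apply: expr_half_le rate_ge0 _ _; rewrite /rate /a; lra.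
have le_lin : n.+1%:R * a ^+ n <= 398%:R * b ^+ n.
  have := linear_le_geometric n (a := a) (x := 397%:R^-1).
  rewrite invrK addrC natr1 (_ : a * (1 + 397%:R^-1) = b); last by rewrite /a /b; field.
  apply; [exact: divr_ge0 | by rewrite invr_gt0 ltr0n].
have b_ge1 : 1 <= b ^+ n by apply: exprn_ege1; rewrite /b; lra.
have P_gt0 : 0 < 2%:R ^+ n :> rat by apply: exprn_gt0; rewrite ltr0n.
apply: le_trans (gtilde_le_card n) _; rewrite ler_pdivrMr; last by rewrite exprS mulr_gt0 ?ltr0n.
apply: le_trans (card_admissible_le n) _.
have := ler_wpM2l (mulr_ge0 (ler0n rat n.+1) (ler0n rat 16)) le_rate.
have := ler_wpM2r (ltW P_gt0) le_lin.
have := ler_wpM2l (ltW P_gt0) b_ge1.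
rewrite exprS; lra.
Qed.

Unset Implicit Arguments.

Theorem mainTheorem13 (R : realType) :
  exists (eps C : R), [/\ 0 < eps, 0 < C &
    forall n : nat, (0 < n)%N -> ratr (gtilde n) <= C * (2 - eps) ^+ n].
Proof.
exists (1 / 100%:R), 3185%:R; split=> [||n _]; rewrite ?divr_gt0 ?ltr0n //.
have -> : 2 - 1 / 100%:R = ratr (199%:R / 100%:R) :> R.
  by rewrite fmorph_div !rmorph_nat; field.
by rewrite -(rmorph_nat (ratr : rat -> R)) -rmorphXn -rmorphM ler_rat gtilde_le_geometric.
Qed.
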